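(* Let $(\mathbf f,\mathbf g)$ be a vector admissible system with potential $U$. Let $(\mathbf x,\epsilon)\in\mathcal X\times\mathcal E$ with $\mathbf x\preceq\mathbf f(\mathbf g(\mathbf x);\epsilon)$ or $\mathbf x\succeq\mathbf f(\mathbf g(\mathbf x);\epsilon)$. Then the limit $\mathbf x^\infty(\mathbf x;\epsilon)$ exists and $U(\mathbf x;\epsilon)\ge U(\mathbf x^\infty(\mathbf x;\epsilon);\epsilon)$.
   Context: Let $d\in\mathbb N$, $\mathcal X=[0,1]^d$, $\mathcal E=[0,1]$, $\mathcal X^\circ=\mathcal X\setminus\{\mathbf 0\}$. Vectors are row vectors; $\mathbf x\preceq\mathbf y$ means $x_i\le y_i$ for all $i$. For a vector-valued function $\mathbf h$ of $\mathbf x$, $\mathbf h'(\mathbf x)$ denotes its Jacobian matrix $[\partial h_i/\partial x_j]_{i,j}$; for a scalar function $F(\mathbf x;\epsilon)$, $F'(\mathbf x;\epsilon)$ denotes its gradient in $\mathbf x$ (a row vector). Let $\mathbf D$ be a $d\times d$ diagonal matrix with positive diagonal entries, $\mathbf f:\mathcal X\times\mathcal E\to\mathcal X$, $\mathbf g:\mathcal X\to\mathcal X$, and $F:\mathcal X\times\mathcal E\to\mathbb R$, $G:\mathcal X\to\mathbb R$ functionals with $F'(\mathbf x;\epsilon)=\mathbf f(\mathbf x;\epsilon)\mathbf D$ and $G'(\mathbf x)=\mathbf g(\mathbf x)\mathbf D$, normalized so that $F(\mathbf 0;\epsilon)=G(\mathbf 0)=0$. The pair $(\mathbf f,\mathbf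 g)$ is a vector admissible system if: (i) $\mathbf f,\mathbf g$ are twice continuously differentiable; (ii) $\mathbf f(\mathbf x;\epsilon)$ and $\mathbf g(\mathbf x)$ are non-decreasing in $\mathbf x$ with respect to $\preceq$; (iii) for each $\mathbf x\in\mathcal X^\circ$, $\mathbf f(\mathbf x;\epsilon)$ is strictly increasing in $\epsilon$, i.e. $\epsilon_1<\epsilon_2$ implies $\mathbf f(\mathbf x;\epsilon_1)\preceq\mathbf f(\mathbf x;\epsilon_2)$ and $\mathbf f(\mathbf x;\epsilon_1)\neq\mathbf f(\mathbf x;\epsilon_2)$; (iv) $\mathbf f(\mathbf 0;\epsilon)=\mathbf f(\mathbf x;0)=\mathbf g(\mathbf 0)=\mathbf 0$ and $F(\mathbf x;0)=0$. The associated recursion is $\mathbf x^{(\ell+1)}=\mathbf f(\mathbf g(\mathbf x^{(\ell)});\epsilon)$. The potential function is $U(\mathbf x;\epsilon)=\mathbf g(\mathbf x)\mathbf D\mathbf x^{\mathsf T}-G(\mathbf x)-F(\mathbf g(\mathbf x);\epsilon)$. For $(\mathbf x,\epsilon)\in\mathcal X\times\mathcal E$, let $\mathbf x^{(0)}=\mathbf x$ and run the recursion; $\mathbf x^\infty(\mathbf x;\epsilon)=\lim_{\ell\to\infty}\mathbf x^{(\ell)}$ whenever this limit exists. *)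

From mathcomp Require Import all_boot.
From Stdlib Require Import Reals.
Set Implicit Arguments. Unset Strict Implicit. Unset Printing Implicit Defensive.
Open Scope R_scope.

Definition vec (d : nat) := 'I_d -> R.

Definition vsum (d : nat) (u : vec d) : R := \big[Rplus/0]_(i < d) u i.
Definition dot (d : nat) (u v : vec d) : R := vsum (fun i => u i * v i).
Definition vsub (d : nat) (u v : vec d) : vec d := fun i => u i - v i.
Definition vzero (d : nat) : vec d := fun _ => 0.
Arguments vzero d : clear implicits.
Definition vnorm (d : nat) (u : vec d) : R := sqrt (dot u u).

Definition inX (d : nat) (x : vec d) : Prop := forall i, 0 <= x i <= 1.
Definition inEps (e : R) : Prop := 0 <= e <= 1.
Definition vle (d : nat) (x y : vec d) : Prop := forall i, x i <= y i.

Definition dist1 (d : nat) (x y : vec d) : R := vnorm (vsub y x).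
Definition dist2 (d : nat) (x : vec d) (e : R) (y : vec d) (e' : R) : R :=
  sqrt (dot (vsub y x) (vsub y x) + (e' - e) * (e' - e)).

Definition has_grad1 (d : nat) (phi : vec d -> R) (gr : vec d -> vec d) : Prop :=
  forall x, inX x -> forall eps, 0 < eps -> exists delta, 0 < delta /\
    forall y, inX y -> dist1 x y < delta ->
      Rabs (phi y - phi x - dot (gr x) (vsub y x)) <= eps * dist1 x y.

Definition cont1 (d : nat) (psi : vec d -> R) : Prop :=
  forall x, inX x -> forall eps, 0 < eps -> exists delta, 0 < delta /\
    forall y, inX y -> dist1 x y < delta -> Rabs (psi y - psi x) < eps.

Definition has_grad2 (d : nat) (phi : vec d -> R -> R)
    (gx : vec d -> R -> vec d) (ge : vec d -> R -> R) : Prop :=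
  forall x e, inX x -> inEps e -> forall eps, 0 < eps -> exists delta, 0 < delta /\
    forall y e', inX y -> inEps e' -> dist2 x e y e' < delta ->
      Rabs (phi y e' - phi x e - (dot (gx x e) (vsub y x) + ge x e * (e' - e)))
        <= eps * dist2 x e y e'.

Definition cont2 (d : nat) (psi : vec d -> R -> R) : Prop :=
  forall x e, inX x -> inEps e -> forall eps, 0 < eps -> exists delta, 0 < delta /\
    forall y e', inX y -> inEps e' -> dist2 x e y e' < delta ->
      Rabs (psi y e' - psi x e) < eps.

Definition C2_1 (d : nat) (h : vec d -> vec d) : Prop :=
  exists J : vec d -> 'I_d -> vec d,
    (forall i, has_grad1 (fun x => h x i) (fun x => J x i)) /\
    (forall i j, exists H : vec d -> vec d,
        has_grad1 (fun x => J x i j) H /\ forall k, cont1 (fun x => H x k)).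

Definition C2_2 (d : nat) (h : vec d -> R -> vec d) : Prop :=
  exists (Jx : vec d -> R -> 'I_d -> vec d) (Je : vec d -> R -> vec d),
    (forall i, has_grad2 (fun x e => h x e i) (fun x e => Jx x e i) (fun x e => Je x e i)) /\
    (forall i j, exists (Hx : vec d -> R -> vec d) (He : vec d -> R -> R),
        has_grad2 (fun x e => Jx x e i j) Hx He /\
        (forall k, cont2 (fun x e => Hx x e k)) /\ cont2 He) /\
    (forall i, exists (Hx : vec d -> R -> vec d) (He : vec d -> R -> R),
        has_grad2 (fun x e => Je x e i) Hx He /\
        (forall k, cont2 (fun x e => Hx x e k)) /\ cont2 He).

(** Vector admissible system (f, g) with diagonal D (diagonal entries Dd) and
    functionals F, G with F' = f D, G' = g D, F(0;e) = G(0) = 0. *)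
Record vector_admissible (d : nat) (Dd : vec d) (f : vec d -> R -> vec d)
    (g : vec d -> vec d) (F : vec d -> R -> R) (G : vec d -> R) : Prop := {
  D_pos : forall i, 0 < Dd i;
  f_maps : forall x e, inX x -> inEps e -> inX (f x e);
  g_maps : forall x, inX x -> inX (g x);
  F_grad : forall e, inEps e -> has_grad1 (fun x => F x e) (fun x i => f x e i * Dd i);
  G_grad : has_grad1 G (fun x i => g x i * Dd i);
  F_zero : forall e, inEps e -> F (vzero d) e = 0;
  G_zero : G (vzero d) = 0;
  f_C2 : C2_2 f;
  g_C2 : C2_1 g;
  f_mono : forall e x y, inEps e -> inX x -> inX y -> vle x y -> vle (f x e) (f y e);
  g_mono : forall x y, inX x -> inX y -> vle x y -> vle (g x) (g y);
  f_strict : forall x e1 e2, inX x -> x <> vzero d -> inEps e1 -> inEps e2 -> e1 < e2 ->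
    vle (f x e1) (f x e2) /\ f x e1 <> f x e2;
  f_0x : forall e, inEps e -> f (vzero d) e = vzero d;
  f_x0 : forall x, inX x -> f x 0 = vzero d;
  g_0 : g (vzero d) = vzero d;
  F_x0 : forall x, inX x -> F x 0 = 0
}.

Definition potential (d : nat) (Dd : vec d) (g : vec d -> vec d)
    (F : vec d -> R -> R) (G : vec d -> R) (x : vec d) (e : R) : R :=
  dot (fun i => g x i * Dd i) x - G x - F (g x) e.

Definition rec_iter (d : nat) (f : vec d -> R -> vec d) (g : vec d -> vec d)
    (e : R) (x : vec d) (l : nat) : vec d :=
  iter l (fun y => f (g y) e) x.

Definition vlim (d : nat) (s : nat -> vec d) (l : vec d) : Prop :=
  forall i, Un_cv (fun n => s n i) (l i).

(* If x <= f(g(x);e) (resp. >=), monotonicity of f and g makes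
   the iterates x^(l) nondecreasing (resp. nonincreasing) in the compact box
   [0,1]^d, hence componentwise convergent to a limit x^oo comparable with
   every iterate.  The potential is controlled by one inequality: for
   comparable a, b in X,
       U(a) - U(b) >= sum_i D_i (g_i(b) - g_i(a)) (f_i(g(a)) - b_i),
   which follows from the first-order lower bound phi(b) - phi(a) >=
   <phi'(a), b - a> for functions with monotone gradient (G and F(.;e)),
   itself a consequence of the mean value theorem along the segment [a, b].
   With b = x^(l+1) the right-hand side vanishes, so U decreases along the
   iterates; with b = x^oo it is bounded below by -sum_i D_i |x_i^(l+1) - x_i^oo|,
   which tends to 0.  Passing to the limit gives U(x) >= U(x^oo). *)

From mathcomp Require Import all_boot.
From Stdlib Require Import Reals Lra Psatz FunctionalExtensionality.
From Coquelicot Require Import Coquelicot.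
From HB Require Import structures.
Open Scope R_scope.
Set Implicit Arguments. Unset Strict Implicit.

(* Real addition is a commutative monoid law; the generic big-operator lemmas
   used below (splitting off the last index, summing two sums) require it. *)
HB.instance Definition _ := Monoid.isComLaw.Build R 0 Rplus
  (fun x y z => esym (Rplus_assoc x y z)) Rplus_comm Rplus_0_l.

Definition clamp (t : R) : R := Rmax 0 (Rmin 1 t).

Lemma clamp_in t : 0 <= clamp t <= 1.
Proof. rewrite /clamp /Rmax /Rmin; repeat case: Rle_dec; lra. Qed.

Lemma clamp_id t : 0 <= t <= 1 -> clamp t = t.
Proof. rewrite /clamp /Rmax /Rmin; repeat case: Rle_dec; lra. Qed.

Lemma clamp_lip t t' : Rabs (clamp t' - clamp t) <= Rabs (t' - t).
Proof.
rewrite /clamp /Rmax /Rmin; repeat case: Rle_dec; rewrite /Rabs;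
  repeat case: Rcase_abs; lra.
Qed.

Definition deriv01 (h dh : R -> R) : Prop :=
  forall t, 0 <= t <= 1 -> forall eps, 0 < eps -> exists delta, 0 < delta /\
    forall s, 0 <= s <= 1 -> Rabs (s - t) < delta ->
      Rabs (h s - h t - (s - t) * dh t) <= eps * Rabs (s - t).

Section Deriv01.
Variables h dh : R -> R.
Hypothesis Hh : deriv01 h dh.

Lemma deriv01_interior t : 0 < t < 1 ->
  derivable_pt_lim (fun s => h (clamp s)) t (dh t).
Proof.
move=> Ht eps Heps.
have [delta [Hdelta Hest]] := Hh (ltac:(lra) : 0 <= t <= 1) (ltac:(lra) : 0 < eps / 2).
have Hpos : 0 < Rmin delta (Rmin t (1 - t)).
  by apply: Rmin_pos => //; apply: Rmin_pos; lra.
exists (mkposreal _ Hpos) => u Hu0 /= Hu.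
have Hm1 := Rmin_l delta (Rmin t (1 - t)); have Hm2 := Rmin_r delta (Rmin t (1 - t)).
have Hm3 := Rmin_l t (1 - t); have Hm4 := Rmin_r t (1 - t).
have Htu : 0 <= t + u <= 1 by move: Hu; rewrite /Rabs; case: Rcase_abs; lra.
have Habs : 0 < Rabs u by apply: Rabs_pos_lt.
rewrite !clamp_id; try lra.
have := Hest _ Htu (ltac:(replace (t + u - t) with u by ring; lra)).
replace (t + u - t) with u by ring.
set A := h (t + u) - h t => HA.
have -> : A / u - dh t = (A - u * dh t) / u by field.
rewrite Rabs_div //; apply: (Rmult_lt_reg_r (Rabs u)) => //.
rewrite /Rdiv Rmult_assoc Rinv_l ?Rmult_1_r; [nra | lra].
Qed.

Lemma deriv01_continuous t : 0 <= t <= 1 -> continuity_pt (fun s => h (clamp s)) t.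
Proof.
move=> Ht eps Heps.
have [delta [Hdelta Hest]] := Hh Ht (ltac:(lra) : 0 < 1).
set K := Rabs (dh t) + 1.
have HK : 0 < K by have := Rabs_pos (dh t); rewrite /K; lra.
have Hpos : 0 < Rmin delta (eps / K) by apply: Rmin_pos => //; apply: Rdiv_lt_0_compat.
exists (Rmin delta (eps / K)); split => // s [_ Hs]; rewrite /= /R_dist in Hs *.
have Hm1 := Rmin_l delta (eps / K); have Hm2 := Rmin_r delta (eps / K).
have Hc := clamp_lip t s; rewrite (clamp_id Ht) in Hc *.
have Hcin := clamp_in s; set c := clamp s in Hc Hcin *.
have Hcs : Rabs (c - t) * K < eps.
  have : Rabs (c - t) < eps / K by lra.
  by move/(Rmult_lt_compat_r K _ _ HK); rewrite /Rdiv Rmult_assoc Rinv_l ?Rmult_1_r; lra.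
have := Hest _ Hcin (ltac:(lra)).
have := Rabs_triang (h c - h t - (c - t) * dh t) ((c - t) * dh t).
rewrite Rabs_mult; replace (h c - h t - (c - t) * dh t + (c - t) * dh t)
  with (h c - h t) by ring.
rewrite /K in Hcs; nra.
Qed.

Lemma mvt01 : exists c, 0 <= c <= 1 /\ h 1 - h 0 = dh c.
Proof.
have := @MVT_gen (fun s => h (clamp s)) 0 1 dh.
rewrite /= Rmin_left ?Rmax_right; try lra.
case.
- by move=> t Ht; apply/is_derive_Reals/deriv01_interior.
- exact: deriv01_continuous.
- move=> c [Hc E]; exists c; split => //.
  by rewrite !clamp_id in E; try lra; rewrite E; ring.
Qed.
End Deriv01.

Section Vectors.
Variable d : nat.

Lemma vsum_le (u v : vec d) : (forall i, u i <= v i) -> vsum u <= vsum v.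
Proof.
move=> H; rewrite /vsum; elim/big_rec2: _ => [|i y1 y2 _ Hy]; first lra.
by have := H i; lra.
Qed.

Lemma vsum_ge0 (u : vec d) : (forall i, 0 <= u i) -> 0 <= vsum u.
Proof.
move=> H; rewrite /vsum; elim/big_rec: _ => [|i y _ Hy]; first lra.
by have := H i; lra.
Qed.

Lemma vsum_ext (u v : vec d) : (forall i, u i = v i) -> vsum u = vsum v.
Proof. by move=> H; rewrite /vsum; apply: eq_bigr => i _. Qed.

Lemma vsum_add (u v : vec d) : vsum u + vsum v = vsum (fun i => u i + v i).
Proof. by rewrite /vsum big_split. Qed.

Lemma vsum_sub (u v : vec d) : vsum u - vsum v = vsum (fun i => u i - v i).
Proof. by rewrite /vsum; elim/big_rec3: _ => [|i y1 y2 y3 _ <-]; lra. Qed.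

Lemma vsum_scal (k : R) (u : vec d) : vsum (fun i => k * u i) = k * vsum u.
Proof. by rewrite /vsum; elim/big_rec2: _ => [|i y1 y2 _ ->]; lra. Qed.

Definition seg (a b : vec d) (t : R) : vec d := fun i => a i + t * (b i - a i).

Lemma seg_in a b t : inX a -> inX b -> 0 <= t <= 1 -> inX (seg a b t).
Proof. by move=> Ha Hb Ht i; rewrite /seg; have := Ha i; have := Hb i; nra. Qed.

Lemma vsub_seg a b t s : vsub (seg a b s) (seg a b t) = fun i => (s - t) * vsub b a i.
Proof. by apply: functional_extensionality => i; rewrite /vsub /seg; ring. Qed.

Lemma dist_seg a b t s : dist1 (seg a b t) (seg a b s) = Rabs (s - t) * vnorm (vsub b a).
Proof.
rewrite /dist1 vsub_seg /vnorm /dot.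
rewrite (vsum_ext (v := fun i => (s - t)² * (vsub b a i * vsub b a i))); last first.
  by move=> i; rewrite /Rsqr; ring.
rewrite vsum_scal sqrt_mult ?sqrt_Rsqr_abs //; first exact: Rle_0_sqr.
by apply: vsum_ge0 => i; nra.
Qed.

Lemma seg_deriv01 (phi : vec d -> R) (psi : vec d -> vec d) a b :
  has_grad1 phi psi -> inX a -> inX b ->
  deriv01 (fun t => phi (seg a b t)) (fun t => dot (psi (seg a b t)) (vsub b a)).
Proof.
move=> Hg Ha Hb t Ht eps Heps.
set N := vnorm (vsub b a).
have HN : 0 <= N by apply: sqrt_pos.
have HN1 : 0 < N + 1 by lra.
have Hdiv : forall r, r / (N + 1) * (N + 1) = r by move=> r; field; lra.
have Hk : 0 < eps / (N + 1) by apply: Rdiv_lt_0_compat.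
have [delta [Hdelta Hest]] := Hg _ (seg_in Ha Hb Ht) _ Hk.
exists (delta / (N + 1)); split; first by apply: Rdiv_lt_0_compat.
move=> s Hs Hst.
have Hst' : Rabs (s - t) * N < delta.
  by have := Hdiv delta; have := Rabs_pos (s - t); nra.
have := Hest _ (seg_in Ha Hb Hs); rewrite dist_seg vsub_seg -/N => /(_ Hst').
have -> : dot (psi (seg a b t)) (fun i => (s - t) * vsub b a i)
        = (s - t) * dot (psi (seg a b t)) (vsub b a).
  by rewrite /dot -vsum_scal; apply: vsum_ext => i; ring.
move: (Rmult_le_pos _ _ (Rlt_le _ _ Hk) (Rabs_pos (s - t))) (Hdiv eps).
move: (eps / (N + 1)) => k Hk0 <-; lra.
Qed.

Definition comparable (u v : vec d) : Prop := vle u v \/ vle v u.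

Lemma monotone_grad_lower_bound (phi : vec d -> R) (psi : vec d -> vec d) a b :
  has_grad1 phi psi ->
  (forall u v, inX u -> inX v -> vle u v -> vle (psi u) (psi v)) ->
  inX a -> inX b -> comparable a b ->
  phi b - phi a >= dot (psi a) (vsub b a).
Proof.
move=> Hg Hmono Ha Hb Hab.
have [t [Ht]] := mvt01 (seg_deriv01 Hg Ha Hb).
have S0 : seg a b 0 = a by apply: functional_extensionality => i; rewrite /seg; ring.
have S1 : seg a b 1 = b by apply: functional_extensionality => i; rewrite /seg; ring.
rewrite S0 S1 => ->; apply: Rle_ge; apply: vsum_le => i.
have Hz := seg_in Ha Hb Ht; rewrite /vsub.
case: Hab => Hab.
- have Haz : vle a (seg a b t) by move=> j; rewrite /seg; have := Hab j; nra.
  by have := Hmono _ _ Ha Hz Haz i; have := Hab i; nra.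
- have Hza : vle (seg a b t) a by move=> j; rewrite /seg; have := Hab j; nra.
  by have := Hmono _ _ Hz Ha Hza i; have := Hab i; nra.
Qed.
End Vectors.

Lemma cv_const (c : R) : Un_cv (fun _ => c) c.
Proof. by move=> eps Heps; exists 0%nat => n _; rewrite /R_dist Rminus_diag Rabs_R0. Qed.

Lemma cv_dist_shift (u : nat -> R) (L : R) :
  Un_cv u L -> Un_cv (fun n => Rabs (u (S n) - L)) 0.
Proof.
move=> Hu eps Heps; have [N HN] := Hu eps Heps; exists N => n Hn.
by rewrite /R_dist Rminus_0_r Rabs_Rabsolu; apply: HN; lia.
Qed.

Lemma vsum_cv (n : nat) (u : nat -> vec n) (L : vec n) :
  vlim u L -> Un_cv (fun l => vsum (u l)) (vsum L).
Proof.
elim: n u L => [|n IH] u L Hu.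
  have -> : (fun l => vsum (u l)) = fun _ => 0.
    by apply: functional_extensionality => l; rewrite /vsum big_ord0.
  by rewrite /vsum big_ord0; apply: cv_const.
have -> : (fun l => vsum (u l))
        = fun l => vsum (fun i => u l (widen_ord (leqnSn n) i)) + u l ord_max.
  by apply: functional_extensionality => l; rewrite /vsum big_ord_recr.
rewrite [vsum L]/vsum big_ord_recr /=; apply: CV_plus; last exact: Hu.
by apply: (IH (fun l i => u l (widen_ord (leqnSn n) i))) => i; apply: Hu.
Qed.

Section MonotoneVectorSequences.
Variables (d : nat) (u : nat -> vec d).
Hypothesis Hu : forall l, inX (u l).

Lemma increasing_vec_cv : (forall l, vle (u l) (u (S l))) ->
  exists L, vlim u L /\ inX L /\ forall l, vle (u l) L.
Proof.
move=> Hmono.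
have Hgr i : Un_growing (fun n => u n i) by move=> n; apply: Hmono.
have Hub i : has_ub (fun n => u n i) by exists 1 => _ [n ->]; case: (Hu n i).
set L := fun i => proj1_sig (growing_cv _ (Hgr i) (Hub i)).
have Hlim : vlim u L by move=> i; exact: proj2_sig (growing_cv _ (Hgr i) (Hub i)).
have Hle l : vle (u l) L by move=> i; exact: growing_ineq (Hgr i) (Hlim i) l.
exists L; split => //; split => // i; split.
- by have := Hle 0%nat i; case: (Hu 0%nat i); lra.
- by apply: (Rle_cv_lim (Vn := fun _ => 1) _ (Hlim i) (cv_const 1)) => n; case: (Hu n i).
Qed.

Lemma decreasing_vec_cv : (forall l, vle (u (S l)) (u l)) ->
  exists L, vlim u L /\ inX L /\ forall l, vle L (u l).
Proof.
move=> Hmono.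
have Hdec i : Un_decreasing (fun n => u n i) by move=> n; apply: Hmono.
have Hlb i : has_lb (fun n => u n i).
  by exists 0 => _ [n ->]; rewrite /opp_seq; case: (Hu n i); lra.
set L := fun i => proj1_sig (decreasing_cv _ (Hdec i) (Hlb i)).
have Hlim : vlim u L by move=> i; exact: proj2_sig (decreasing_cv _ (Hdec i) (Hlb i)).
have Hle l : vle L (u l) by move=> i; exact: decreasing_ineq (Hdec i) (Hlim i) l.
exists L; split => //; split => // i; split.
- by apply: (Rle_cv_lim (Un := fun _ => 0) _ (cv_const 0) (Hlim i)) => n; case: (Hu n i).
- by have := Hle 0%nat i; case: (Hu 0%nat i); lra.
Qed.
End MonotoneVectorSequences.

Section Potential.
Variables (d : nat) (Dd : vec d) (f : vec d -> R -> vec d) (g : vec d -> vec d)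
  (F : vec d -> R -> R) (G : vec d -> R).
Hypothesis HA : vector_admissible Dd f g F G.
Variable e : R.
Hypothesis He : inEps e.

Local Notation U y := (potential Dd g F G y e).

(* It combines the first-order lower bounds for G and for F(.;e), whose
   gradients g D and f D are monotone. *)
Lemma potential_gap a b : inX a -> inX b -> comparable a b ->
  U a - U b >= vsum (fun i => Dd i * (g b i - g a i) * (f (g a) e i - b i)).
Proof.
move=> Ha Hb Hab.
have Hga := g_maps HA Ha; have Hgb := g_maps HA Hb.
have HG : G b - G a >= dot (fun i => g a i * Dd i) (vsub b a).
  apply: (monotone_grad_lower_bound (G_grad HA)) => // u v Hu Hv Huv i.
  by have := D_pos HA i; have := g_mono HA Hu Hv Huv i; nra.
have HF : F (g b) e - F (g a) e >= dot (fun i => f (g a) e i * Dd i) (vsub (g b) (g a)).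
  apply: (monotone_grad_lower_bound (F_grad HA He)) => //.
  - move=> u v Hu Hv Huv i.
    by have := D_pos HA i; have := f_mono HA He Hu Hv Huv i; nra.
  - by case: Hab => H; [left; exact (g_mono HA Ha Hb H) | right; exact (g_mono HA Hb Ha H)].
have -> : vsum (fun i => Dd i * (g b i - g a i) * (f (g a) e i - b i))
   = dot (fun i => g a i * Dd i) a - dot (fun i => g b i * Dd i) b
   + dot (fun i => g a i * Dd i) (vsub b a)
   + dot (fun i => f (g a) e i * Dd i) (vsub (g b) (g a)).
  by rewrite /dot vsum_sub !vsum_add; apply: vsum_ext => i; rewrite /vsub; ring.
rewrite /potential; lra.
Qed.

Variable x : vec d.
Hypothesis Hx : inX x.

Local Notation s := (rec_iter f g e x).

Lemma iterate_inX l : inX (s l).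
Proof. by elim: l => [|l IH] //; apply: (f_maps HA (g_maps HA IH) He). Qed.

Lemma iterates_increasing : vle x (f (g x) e) -> forall l, vle (s l) (s (S l)).
Proof.
move=> Hx0; elim=> [|l IH] //.
have Hl := iterate_inX l; have HSl := iterate_inX (S l).
exact (f_mono HA He (g_maps HA Hl) (g_maps HA HSl) (g_mono HA Hl HSl IH)).
Qed.

Lemma iterates_decreasing : vle (f (g x) e) x -> forall l, vle (s (S l)) (s l).
Proof.
move=> Hx0; elim=> [|l IH] //.
have Hl := iterate_inX l; have HSl := iterate_inX (S l).
exact (f_mono HA He (g_maps HA HSl) (g_maps HA Hl) (g_mono HA HSl Hl IH)).
Qed.

(* The potential does not increase along comparable consecutive iterates:
   in [potential_gap] with b = f(g(a)) the second factor vanishes. *)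
Lemma potential_iterates_le :
  (forall l, comparable (s l) (s (S l))) -> forall l, U (s l) <= U x.
Proof.
move=> Hcmp; elim=> [|l IH]; first by apply: Rle_refl.
have := potential_gap (iterate_inX l) (iterate_inX (S l)) (Hcmp l).
have : 0 <= vsum (fun i => Dd i * (g (s (S l)) i - g (s l) i) * (f (g (s l)) e i - s (S l) i)).
  by apply: vsum_ge0 => i; rewrite Rminus_diag Rmult_0_r; apply: Rle_refl.
lra.
Qed.

(* Comparing an iterate with a comparable point y of X, the potential at the
   iterate exceeds U(y) up to an error controlled by |s(l+1) - y|, because
   g takes values in [0,1]. *)
Lemma potential_tail y l : inX y -> comparable (s l) y ->
  U (s l) - U y >= - vsum (fun i => Dd i * Rabs (s (S l) i - y i)).
Proof.
move=> Hy Hcmp.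
have := potential_gap (iterate_inX l) Hy Hcmp.
suff : - vsum (fun i => Dd i * Rabs (s (S l) i - y i))
   <= vsum (fun i => Dd i * (g y i - g (s l) i) * (f (g (s l)) e i - y i)) by lra.
have -> : - vsum (fun i => Dd i * Rabs (s (S l) i - y i))
        = vsum (fun i => -1 * (Dd i * Rabs (s (S l) i - y i))) by rewrite vsum_scal; ring.
apply: vsum_le => i.
have := D_pos HA i; have := g_maps HA Hy i; have := g_maps HA (iterate_inX l) i.
move=> Hgs Hgy HD.
have : 0 <= (g y i - g (s l) i) * (s (S l) i - y i) + Rabs (s (S l) i - y i).
  by rewrite /Rabs; case: Rcase_abs => ?; nra.
by move=> Hslack; have := Rmult_le_pos _ _ (Rlt_le _ _ HD) Hslack; rewrite /=; nra.
Qed.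

Lemma potential_limit_le y : vlim s y -> inX y ->
  (forall l, comparable (s l) y) -> (forall l, comparable (s l) (s (S l))) ->
  U y <= U x.
Proof.
move=> Hlim Hy Hcmp Hstep.
set w := fun l => vsum (fun i => Dd i * Rabs (s (S l) i - y i)).
have Hw : Un_cv w 0.
  have -> : 0 = vsum (fun i => Dd i * 0).
    by rewrite (vsum_ext (v := fun i => 0 * Dd i)) ?vsum_scal => [|i]; ring.
  apply: (vsum_cv (u := fun l i => Dd i * Rabs (s (S l) i - y i))) => i.
  exact: CV_mult (cv_const (Dd i)) (cv_dist_shift (Hlim i)).
apply: (Rle_cv_lim (Un := fun l => U y - w l) (Vn := fun _ => U x)).
- move=> l; have := potential_tail Hy (Hcmp l).
  by have := potential_iterates_le Hstep l; rewrite /w; lra.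
- by rewrite -{2}[U y]Rminus_0_r; apply: CV_minus => //; apply: cv_const.
- exact: cv_const.
Qed.
End Potential.

Theorem lemma4 (d : nat) (Dd : vec d) (f : vec d -> R -> vec d)
    (g : vec d -> vec d) (F : vec d -> R -> R) (G : vec d -> R) :
  vector_admissible Dd f g F G ->
  forall (x : vec d) (e : R), inX x -> inEps e ->
    (vle x (f (g x) e) \/ vle (f (g x) e) x) ->
    exists xinf : vec d,
      vlim (rec_iter f g e x) xinf /\
      potential Dd g F G x e >= potential Dd g F G xinf e.
Proof.
move=> HA x e Hx He [Hsub | Hsuper].
- have Hmono := iterates_increasing HA He Hx Hsub.
  have [xinf [Hlim [Hin Hle]]] := increasing_vec_cv (iterate_inX HA He Hx) Hmono.
  exists xinf; split => //; apply: Rle_ge.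
  by apply: (potential_limit_le HA He Hx Hlim Hin) => l; left.
- have Hmono := iterates_decreasing HA He Hx Hsuper.
  have [xinf [Hlim [Hin Hle]]] := decreasing_vec_cv (iterate_inX HA He Hx) Hmono.
  exists xinf; split => //; apply: Rle_ge.
  by apply: (potential_limit_le HA He Hx Hlim Hin) => l; right.
Qed.
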